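(* In the setting described in the context, for every real $s>\frac n2$, $$\exp\Big(-\frac{s-\frac n2}{\tau^2}\Big)<\frac{g(s+1)}{g(s)}<\exp\Big(-\Big(1-\frac1{12\tau^2}\Big)\frac{s-\frac n2}{\tau^2}\Big).$$
   Context: Standing setting: $\Phi$ is the standard normal distribution function. Binomial law $\mathrm B_{m,p}(\{k\})=\binom mk p^k(1-p)^{m-k}$; hypergeometric law $\mathrm H_{m,r,b}(\{k\})=\binom rk\binom b{m-k}/\binom{r+b}m$ ($r,b\in\mathbb N_0$, $m\in\{0,\dots,r+b\}$, $k\in\mathbb Z$, binomial coefficients with non-integer lower index being $0$). $P$ is a symmetric (about its mean) hypergeometric or symmetric binomial law with mean $\frac n2$ and standard deviation $\sigma>0$; $N\in\mathbb N\cup\{\infty\}$ is a population size parameter of $P$ (i.e. $N=\infty$ and $P$ binomial, or $P=\mathrm H_{m,r,b}$ with $r+b=N$); $\sigma_0^2=\frac{N-1}N\sigma^2$ if $N<\infty$, $\sigma_0^2=\sigma^2$ if $N=\infty$. $\tau\in[\sigma_0,\sigma]$, $G(s)=\Phi((s-\frac n2)/\tau)$ and $g(s):=G(s)-G(s-1)$ for $s\in\mathbb R$. *)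

From Stdlib Require Import Reals ZArith.
From Coquelicot Require Import Coquelicot.
Open Scope R_scope.

Definition std_normal_pdf (t : R) : R := exp (- t ^ 2 / 2) / sqrt (2 * PI).
Definition Phi (x : R) : R :=
  RInt_gen std_normal_pdf (Rbar_locally m_infty) (at_point x).

Definition binZ (a : nat) (k : Z) : R :=
  if ((0 <=? k)%Z && (k <=? Z.of_nat a)%Z)%bool then Binomial.C a (Z.to_nat k) else 0.

Definition binom_pmf (m : nat) (p : R) (k : Z) : R :=
  binZ m k * p ^ (Z.to_nat k) * (1 - p) ^ (m - Z.to_nat k).

Definition hyper_pmf (m r b : nat) (k : Z) : R :=
  binZ r k * binZ b (Z.of_nat m - k) / Binomial.C (r + b) m.

Definition law_mean (m : nat) (P : Z -> R) : R :=
  sum_f_R0 (fun k => INR k * P (Z.of_nat k)) m.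
Definition law_var (m : nat) (P : Z -> R) : R :=
  sum_f_R0 (fun k => (INR k - law_mean m P) ^ 2 * P (Z.of_nat k)) m.

(* Population size: None stands for N = infinity. *)
Definition sym_law (n : nat) (N : option nat) (sigma : R) (P : Z -> R) : Prop :=
  exists m : nat,
    ((N = None /\ exists p, 0 <= p <= 1 /\ forall k, P k = binom_pmf m p k)
     \/ (exists r b : nat, N = Some (r + b)%nat /\ (m <= r + b)%nat /\
           forall k, P k = hyper_pmf m r b k))
    /\ law_mean m P = INR n / 2
    /\ sqrt (law_var m P) = sigma
    /\ (forall k : Z, P k = P (Z.of_nat n - k)%Z).

Definition sigma0 (N : option nat) (sigma : R) : R :=
  match N with
  | None => sigma
  | Some N' => sqrt ((INR N' - 1) / INR N' * sigma ^ 2)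
  end.

Definition G (n : nat) (tau s : R) : R := Phi ((s - INR n / 2) / tau).
Definition g (n : nat) (tau s : R) : R := G n tau s - G n tau (s - 1).

(* [g n tau s] is the standard normal mass of the window of half-width
   [H = 1/(2 tau)] around [m = (s - 1/2 - n/2)/tau], and folding the window at
   its midpoint gives [2/sqrt(2 pi) * exp (- m^2/2) * \int_0^H exp (-t^2/2) cosh (m t) dt].
   For the windows of [g (s+1)] and [g s] the Gaussian prefactors have ratio
   exactly [exp (- (s - n/2)/tau^2)], while the [cosh] integral increases with
   [|m|]: this is the lower bound.  For the upper bound,
   [c |-> exp (- H^2 c^2/6) * \int_0^H exp (-t^2/2) cosh (c t) dt] decreases on
   [0, +oo).  Without the weight [exp (-t^2/2)] this is the monotonicity of
   [sinh z / z * exp (- z^2/6)], i.e. [coth z < 1/z + z/3]; the decreasing weight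
   is then brought in by a single-crossing (second mean value) argument. *)

From Stdlib Require Import Reals ZArith Lra Lia Psatz.
From Coquelicot Require Import Coquelicot.
Open Scope R_scope.

Ltac continuous_smooth :=
  apply (ex_derive_continuous (K := R_AbsRing) (V := R_NormedModule));
  unfold std_normal_pdf, cosh; auto_derive; auto.

Ltac ex_RInt_smooth :=
  apply (ex_RInt_continuous (V := R_CompleteNormedModule)); intros; continuous_smooth.

Ltac to_R_eq := match goal with |- ?u = ?v => change (@eq R u v) end.

Lemma exp_le_compat x y : x <= y -> exp x <= exp y.
Proof. intros [Hlt|Heq]; [left; apply exp_increasing, Hlt|rewrite Heq; apply Rle_refl]. Qed.

Lemma cosh_lt_nonneg a b : 0 <= a < b -> cosh a < cosh b.
Proof.
  intros [Ha Hab].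
  destruct (MVT_cor2 cosh sinh a b Hab) as [c [Hc Hac]];
    [intros; apply derivable_pt_lim_cosh|].
  assert (0 < sinh c) by (rewrite <- sinh_0; apply sinh_lt; lra).
  nra.
Qed.

Lemma cosh_opp x : cosh (- x) = cosh x.
Proof. unfold cosh. rewrite Ropp_involutive. lra. Qed.

Lemma cosh_Rabs x : cosh (Rabs x) = cosh x.
Proof. unfold Rabs; destruct (Rcase_abs x); [apply cosh_opp|reflexivity]. Qed.

Lemma cosh_le_Rabs c d : Rabs c <= Rabs d -> cosh c <= cosh d.
Proof.
  intros [Hlt|Heq]; rewrite <- (cosh_Rabs c), <- (cosh_Rabs d).
  - left; apply cosh_lt_nonneg; split; [apply Rabs_pos|exact Hlt].
  - rewrite Heq; lra.
Qed.

Lemma cosh_pos x : 0 < cosh x.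
Proof.
  assert (cosh 0 <= cosh x) by (apply cosh_le_Rabs; rewrite Rabs_R0; apply Rabs_pos).
  rewrite cosh_0 in *; lra.
Qed.

Lemma cosh_mul_cosh A B : cosh A * cosh B = (cosh (A + B) + cosh (A - B)) / 2.
Proof.
  unfold cosh, Rminus. rewrite !Ropp_plus_distr, Ropp_involutive, !exp_plus, !exp_Ropp.
  field. split; apply Rgt_not_eq, exp_pos.
Qed.

Lemma cosh_ratio_monotone x y t1 t2 : 0 <= y <= x -> 0 <= t1 <= t2 ->
  cosh (x * t1) * cosh (y * t2) <= cosh (x * t2) * cosh (y * t1).
Proof.
  intros Hy Ht. rewrite !cosh_mul_cosh.
  assert (cosh (x * t1 + y * t2) <= cosh (x * t2 + y * t1)).
  { apply cosh_le_Rabs. rewrite !Rabs_pos_eq; nra. }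
  assert (cosh (x * t1 - y * t2) <= cosh (x * t2 - y * t1)).
  { apply cosh_le_Rabs, Rabs_le. rewrite (Rabs_pos_eq (x * t2 - y * t1)); nra. }
  lra.
Qed.

Lemma sinh_lt_mul_cosh z : 0 < z -> sinh z < z * cosh z.
Proof.
  intros Hz.
  destruct (MVT_cor2 (fun z => z * cosh z - sinh z) (fun z => z * sinh z) 0 z Hz)
    as [c [Hc Hcz]].
  { intros c _. apply is_derive_Reals. unfold cosh, sinh. auto_derive; [auto|]. field. }
  rewrite Rmult_0_l, sinh_0 in Hc.
  assert (0 < sinh c) by (rewrite <- sinh_0; apply sinh_lt; lra).
  assert (0 < c * sinh c * z) by (apply Rmult_lt_0_compat; [apply Rmult_lt_0_compat|]; lra).
  lra.
Qed.

Lemma mul_cosh_lt z : 0 < z -> z * cosh z < sinh z + z ^ 2 * sinh z / 3.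
Proof.
  intros Hz.
  destruct (MVT_cor2 (fun z => z ^ 2 * sinh z / 3 - z * cosh z + sinh z)
     (fun z => z / 3 * (z * cosh z - sinh z)) 0 z Hz) as [c [Hc Hcz]].
  { intros c _. apply is_derive_Reals. unfold cosh, sinh. auto_derive; [auto|]. field. }
  rewrite sinh_0 in Hc.
  assert (sinh c < c * cosh c) by (apply sinh_lt_mul_cosh; lra).
  assert (0 < c / 3 * (c * cosh c - sinh c)) by (apply Rmult_lt_0_compat; lra).
  nra.
Qed.

Definition damped_sinhc (z : R) : R := sinh z / z * exp (- (z ^ 2 / 6)).

Lemma damped_sinhc_decreasing y x : 0 < y < x -> damped_sinhc x < damped_sinhc y.
Proof.
  intros [Hy Hyx].
  destruct (MVT_cor2 damped_sinhc
     (fun z => exp (- (z ^ 2 / 6)) / z ^ 2 * (z * cosh z - sinh z - z ^ 2 * sinh z / 3))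
     y x Hyx) as [c [Hc Hcxy]].
  { intros c Hc. apply is_derive_Reals. unfold damped_sinhc, cosh, sinh.
    auto_derive; [lra|].
    replace (c * (c * 1) * / 6) with (c ^ 2 / 6) by (unfold Rdiv; ring). field. lra. }
  assert (c * cosh c < sinh c + c ^ 2 * sinh c / 3) by (apply mul_cosh_lt; lra).
  assert (0 < exp (- (c ^ 2 / 6)) / c ^ 2) by (apply Rdiv_lt_0_compat; [apply exp_pos|nra]).
  assert (0 < exp (- (c ^ 2 / 6)) / c ^ 2 * (sinh c + c ^ 2 * sinh c / 3 - c * cosh c))
    by (apply Rmult_lt_0_compat; lra).
  nra.
Qed.

(* The limit [sinh h / h --> 1] at [0] is the derivative of [sinh] at [0]. *)
Lemma damped_sinhc_le_1 x : 0 < x -> damped_sinhc x <= 1.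
Proof.
  intros Hx. apply Rnot_lt_le; intros H1.
  destruct (derivable_pt_lim_sinh 0 (damped_sinhc x - 1)) as [d Hd]; [lra|].
  pose proof (cond_pos d). pose proof (Rmin_l (d / 2) (x / 2)). pose proof (Rmin_r (d / 2) (x / 2)).
  assert (Hh : 0 < Rmin (d / 2) (x / 2)) by (apply Rmin_glb_lt; lra).
  set (h := Rmin (d / 2) (x / 2)) in *.
  specialize (Hd h ltac:(lra)).
  rewrite Rplus_0_l, sinh_0, cosh_0, Rminus_0_r, Rabs_pos_eq in Hd by lra.
  specialize (Hd ltac:(lra)). apply Rabs_def2 in Hd.
  assert (damped_sinhc x < damped_sinhc h) by (apply damped_sinhc_decreasing; lra).
  assert (0 < sinh h / h) by (apply Rdiv_lt_0_compat; [rewrite <- sinh_0; apply sinh_lt|]; lra).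
  assert (exp (- (h ^ 2 / 6)) <= 1) by (rewrite <- exp_0; apply exp_le_compat; nra).
  unfold damped_sinhc in *. nra.
Qed.

Lemma damped_sinhc_lt_1 x : 0 < x -> damped_sinhc x < 1.
Proof.
  intros Hx.
  assert (damped_sinhc x < damped_sinhc (x / 2)) by (apply damped_sinhc_decreasing; lra).
  assert (damped_sinhc (x / 2) <= 1) by (apply damped_sinhc_le_1; lra).
  lra.
Qed.

Lemma single_crossing (f rho : R -> R) a b :
  a <= b -> continuity f -> f a <= 0 ->
  (forall t, a <= t <= b -> 0 < rho t) ->
  (forall t1 t2, a <= t1 <= t2 -> t2 <= b -> f t1 * rho t2 <= f t2 * rho t1) ->
  exists t0, a <= t0 <= b /\
    forall t, a <= t <= b -> (t < t0 -> f t <= 0) /\ (t0 < t -> 0 <= f t).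
Proof.
  intros Hab Hf Hfa Hrho Hmono.
  assert (Hnonneg : forall t1 t2, a <= t1 <= t2 -> t2 <= b -> 0 <= f t1 -> 0 <= f t2).
  { intros t1 t2 Ht Htb Hf1. specialize (Hmono t1 t2 Ht Htb).
    pose proof (Hrho t1 ltac:(lra)). pose proof (Hrho t2 ltac:(lra)). nra. }
  destruct (Rle_or_lt (f b) 0) as [Hfb|Hfb].
  - exists b. split; [lra|]. intros t Ht. split; [|lra]. intros _.
    apply Rnot_lt_le. intros Hft.
    specialize (Hmono t b ltac:(lra) ltac:(lra)).
    pose proof (Hrho t ltac:(lra)). pose proof (Hrho b ltac:(lra)). nra.
  - destruct (IVT_cor f a b Hf Hab ltac:(nra)) as [t0 [Ht0 Hft0]].
    exists t0. split; [exact Ht0|]. intros t Ht. split; intros Htt.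
    + apply Rnot_lt_le. intros Hft.
      specialize (Hmono t t0 ltac:(lra) ltac:(lra)). rewrite Hft0 in Hmono.
      pose proof (Hrho t ltac:(lra)). pose proof (Hrho t0 ltac:(lra)). nra.
    + apply (Hnonneg t0); lra.
Qed.

(* A one-sided second mean value inequality: weighting a single-crossing [f]
   by a nonincreasing [w] gives more weight to the negative part. *)
Lemma RInt_nonincr_weight_le (w f : R -> R) a b t0 :
  a <= t0 <= b ->
  (forall t1 t2, a <= t1 <= t2 -> t2 <= b -> w t2 <= w t1) ->
  (forall t, a <= t <= b -> (t < t0 -> f t <= 0) /\ (t0 < t -> 0 <= f t)) ->
  ex_RInt (fun t => w t * f t) a b -> ex_RInt f a b ->
  RInt (fun t => w t * f t) a b <= w t0 * RInt f a b.
Proof.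
  intros Ht0 Hw Hf Hwf Hfi.
  change (w t0 * RInt f a b) with (scal (w t0) (RInt f a b)).
  rewrite <- (RInt_scal (V := R_CompleteNormedModule)) by exact Hfi.
  apply RInt_le; [lra|exact Hwf|apply (ex_RInt_scal (V := R_CompleteNormedModule)), Hfi|].
  intros t Ht. change (scal (w t0) (f t)) with (w t0 * f t).
  destruct (Hf t ltac:(lra)) as [Hneg Hpos].
  destruct (Rtotal_order t t0) as [Hlt|[Heq|Hgt]].
  - pose proof (Hw t t0 ltac:(lra) ltac:(lra)). pose proof (Hneg Hlt). nra.
  - rewrite Heq; lra.
  - pose proof (Hw t0 t ltac:(lra) ltac:(lra)). pose proof (Hpos Hgt). nra.
Qed.

Lemma RInt_scal_sub (f g : R -> R) a b p q : ex_RInt f a b -> ex_RInt g a b ->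
  RInt (fun t => p * f t - q * g t) a b = p * RInt f a b - q * RInt g a b.
Proof.
  intros Hf Hg.
  rewrite (RInt_ext _ (fun t => minus (scal p (f t)) (scal q (g t)))) by reflexivity.
  rewrite (RInt_minus (V := R_CompleteNormedModule))
    by (apply (ex_RInt_scal (V := R_CompleteNormedModule)); assumption).
  rewrite !(RInt_scal (V := R_CompleteNormedModule)) by assumption.
  reflexivity.
Qed.

Definition cosh_int (H c : R) : R := RInt (fun t => cosh (c * t)) 0 H.

Definition gauss_cosh_int (H c : R) : R :=
  RInt (fun t => exp (- t ^ 2 / 2) * cosh (c * t)) 0 H.

Lemma cosh_int_pos H c : 0 < c -> cosh_int H c = sinh (c * H) / c.
Proof.
  intros Hc. unfold cosh_int. apply is_RInt_unique.
  replace (sinh (c * H) / c) with (minus (sinh (c * H) / c) (sinh (c * 0) / c))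
    by (rewrite Rmult_0_r, sinh_0; change (minus ?u ?v) with (u - v); to_R_eq; field; lra).
  apply (is_RInt_derive (V := R_CompleteNormedModule) (fun t => sinh (c * t) / c)).
  - intros t _. unfold sinh, cosh. auto_derive; [auto|].
    to_R_eq. field. lra.
  - intros t _. continuous_smooth.
Qed.

Lemma cosh_int_0 H : cosh_int H 0 = H.
Proof.
  unfold cosh_int. rewrite (RInt_ext _ (fun _ => 1)).
  - rewrite RInt_const. change (scal ?u ?v) with (u * v). to_R_eq. ring.
  - intros. rewrite Rmult_0_l, cosh_0. reflexivity.
Qed.

(* The left side is [H * damped_sinhc (x H)]: this is where the constant [H^2/3] comes from. *)
Lemma cosh_int_decreasing H y x : 0 < H -> 0 <= y < x ->
  exp (- (H ^ 2 / 3) * x ^ 2 / 2) * cosh_int H x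
  < exp (- (H ^ 2 / 3) * y ^ 2 / 2) * cosh_int H y.
Proof.
  intros HH [Hy Hyx].
  assert (Hdamped : forall z, 0 < z ->
    exp (- (H ^ 2 / 3) * z ^ 2 / 2) * cosh_int H z = H * damped_sinhc (z * H)).
  { intros z Hz. rewrite cosh_int_pos by lra. unfold damped_sinhc.
    replace (- ((z * H) ^ 2 / 6)) with (- (H ^ 2 / 3) * z ^ 2 / 2) by field.
    field. lra. }
  rewrite Hdamped by lra.
  destruct Hy as [Hy|Hy].
  - rewrite Hdamped by lra.
    apply Rmult_lt_compat_l; [lra|]. apply damped_sinhc_decreasing. split; nra.
  - subst y. rewrite cosh_int_0, pow_i, Rmult_0_r, Rdiv_0_l, exp_0 by lia.
    assert (damped_sinhc (x * H) < 1) by (apply damped_sinhc_lt_1; nra).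
    nra.
Qed.

Lemma gauss_cosh_int_Rabs H c : gauss_cosh_int H (Rabs c) = gauss_cosh_int H c.
Proof.
  unfold gauss_cosh_int. apply RInt_ext. intros t _. f_equal.
  unfold Rabs; destruct (Rcase_abs c); [|reflexivity].
  rewrite <- cosh_opp. f_equal. ring.
Qed.

Lemma gauss_cosh_int_pos H c : 0 < H -> 0 < gauss_cosh_int H c.
Proof.
  intros HH. apply RInt_gt_0; [exact HH| |intros; continuous_smooth].
  intros t _. apply Rmult_lt_0_compat; [apply exp_pos|apply cosh_pos].
Qed.

Lemma gauss_cosh_int_lt H y x : 0 < H -> 0 <= y < x ->
  gauss_cosh_int H y < gauss_cosh_int H x.
Proof.
  intros HH Hyx. apply RInt_lt; [lra|intros; continuous_smooth|intros; continuous_smooth|].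
  intros t Ht. apply Rmult_lt_compat_l; [apply exp_pos|].
  apply cosh_lt_nonneg. split; nra.
Qed.

(* [psi t = al cosh (x t) - be cosh (y t)] changes sign once on [0, H] (by
   [cosh_ratio_monotone]) and has negative integral (by [cosh_int_decreasing]);
   the Gaussian weight is decreasing. *)
Lemma gauss_cosh_int_decreasing H y x : 0 < H -> 0 <= y < x ->
  exp (- (H ^ 2 / 3) * x ^ 2 / 2) * gauss_cosh_int H x
  < exp (- (H ^ 2 / 3) * y ^ 2 / 2) * gauss_cosh_int H y.
Proof.
  intros HH [Hy Hyx].
  set (al := exp (- (H ^ 2 / 3) * x ^ 2 / 2)).
  set (be := exp (- (H ^ 2 / 3) * y ^ 2 / 2)).
  assert (Hal : 0 < al) by apply exp_pos.
  assert (Halbe : al < be).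
  { apply exp_increasing. assert (y ^ 2 < x ^ 2) by nra. assert (0 < H ^ 2) by nra. nra. }
  set (psi := fun t => al * cosh (x * t) - be * cosh (y * t)).
  set (w := fun t => exp (- t ^ 2 / 2)).
  destruct (single_crossing psi (fun t => cosh (y * t)) 0 H) as [t0 [Ht0 Hsign]].
  - lra.
  - intros t. apply derivable_continuous_pt, ex_derive_Reals_0.
    unfold psi, cosh. auto_derive. auto.
  - unfold psi. rewrite !Rmult_0_r, cosh_0. lra.
  - intros t _. apply cosh_pos.
  - intros t1 t2 Ht _. unfold psi.
    pose proof (cosh_ratio_monotone x y t1 t2 ltac:(lra) ltac:(lra)). nra.
  - assert (Hweighted : RInt (fun t => w t * psi t) 0 H <= w t0 * RInt psi 0 H).
    { apply RInt_nonincr_weight_le; [exact Ht0| |exact Hsign| |].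
      - intros t1 t2 Ht _. apply exp_le_compat. nra.
      - unfold w, psi. ex_RInt_smooth.
      - unfold psi. ex_RInt_smooth. }
    assert (Ew : RInt (fun t => w t * psi t) 0 H
                 = al * gauss_cosh_int H x - be * gauss_cosh_int H y).
    { unfold gauss_cosh_int. rewrite <- RInt_scal_sub by ex_RInt_smooth.
      apply RInt_ext. intros t _. unfold w, psi. to_R_eq. ring. }
    assert (Eu : RInt psi 0 H = al * cosh_int H x - be * cosh_int H y).
    { unfold cosh_int. rewrite <- RInt_scal_sub by ex_RInt_smooth. reflexivity. }
    assert (Hu := cosh_int_decreasing H y x HH ltac:(lra)). fold al be in Hu.
    assert (0 < w t0) by apply exp_pos.
    rewrite Ew, Eu in Hweighted. nra.
Qed.

Lemma sqrt_2PI_gt_1 : 1 < sqrt (2 * PI).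
Proof. rewrite <- sqrt_1. pose proof PI2_1. apply sqrt_lt_1; lra. Qed.

Lemma std_normal_pdf_pos t : 0 < std_normal_pdf t.
Proof.
  unfold std_normal_pdf. pose proof sqrt_2PI_gt_1.
  apply Rdiv_lt_0_compat; [apply exp_pos|lra].
Qed.

Lemma ex_RInt_std_normal_pdf a b : ex_RInt std_normal_pdf a b.
Proof. ex_RInt_smooth. Qed.

Lemma std_normal_pdf_le_exp t : std_normal_pdf t <= exp (t + 1).
Proof.
  unfold std_normal_pdf. pose proof sqrt_2PI_gt_1.
  assert (Hexp : exp (- t ^ 2 / 2) <= exp (t + 1)) by (apply exp_le_compat; nra).
  assert (0 < exp (- t ^ 2 / 2)) by apply exp_pos.
  apply Rle_trans with (2 := Hexp). apply Rle_div_l; [lra|]. nra.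
Qed.

Lemma RInt_std_normal_pdf_bounds p q : p <= q ->
  0 <= RInt std_normal_pdf p q <= exp (q + 1) - exp (p + 1).
Proof.
  intros Hpq.
  assert (Hexp : is_RInt (fun t => exp (t + 1)) p q (exp (q + 1) - exp (p + 1))).
  { apply (is_RInt_derive (V := R_CompleteNormedModule) (fun t => exp (t + 1))).
    - intros t _. auto_derive; auto. ring.
    - intros t _. continuous_smooth. }
  split.
  - apply RInt_ge_0; [exact Hpq|apply ex_RInt_std_normal_pdf|].
    intros; left; apply std_normal_pdf_pos.
  - rewrite <- (is_RInt_unique _ _ _ _ Hexp).
    apply RInt_le; [exact Hpq|apply ex_RInt_std_normal_pdf|eexists; exact Hexp|].
    intros; apply std_normal_pdf_le_exp.
Qed.

(* Cauchy criterion: both tails below [ln eps - 1] have mass less than [eps]. *)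
Lemma ex_RInt_gen_std_normal_pdf x :
  ex_RInt_gen std_normal_pdf (Rbar_locally m_infty) (at_point x).
Proof.
  apply (filterlimi_locally_cauchy (U := R_CompleteSpace)
     (F := filter_prod (Rbar_locally m_infty) (at_point x))).
  - apply filter_forall. intros [a b]; simpl. split.
    + exists (RInt std_normal_pdf a b).
      apply (RInt_correct (V := R_CompleteNormedModule)), ex_RInt_std_normal_pdf.
    + intros y1 y2 H1 H2.
      apply (is_RInt_unique (V := R_CompleteNormedModule)) in H1, H2. congruence.
  - intros eps.
    exists (fun ab => fst ab < ln eps - 1 /\ snd ab = x). split.
    + apply Filter_prod with (fun a => a < ln eps - 1) (fun b => b = x);
        [exists (ln eps - 1); auto|reflexivity|intros; simpl; auto].
    + intros [u1 u2] [v1 v2] [Hu1 Hu2] [Hv1 Hv2] u' v' Hu Hv. simpl in *. subst u2 v2.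
      apply (is_RInt_unique (V := R_CompleteNormedModule)) in Hu, Hv. subst u' v'.
      change (Rabs (RInt std_normal_pdf v1 x - RInt std_normal_pdf u1 x) < eps).
      rewrite <- (RInt_Chasles (V := R_CompleteNormedModule) _ v1 u1 x)
        by apply ex_RInt_std_normal_pdf.
      change (plus ?u ?v) with (u + v). unfold Rminus. rewrite Rplus_assoc, Rplus_opp_r, Rplus_0_r.
      assert (Heps : exp (ln eps - 1 + 1) = eps)
        by (replace (ln eps - 1 + 1) with (ln eps) by ring; apply exp_ln, cond_pos).
      assert (exp (u1 + 1) < eps) by (rewrite <- Heps; apply exp_increasing; lra).
      assert (exp (v1 + 1) < eps) by (rewrite <- Heps; apply exp_increasing; lra).
      pose proof (exp_pos (u1 + 1)). pose proof (exp_pos (v1 + 1)).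
      destruct (Rle_or_lt v1 u1) as [Hle|Hlt].
      * destruct (RInt_std_normal_pdf_bounds v1 u1 Hle). rewrite Rabs_pos_eq; lra.
      * destruct (RInt_std_normal_pdf_bounds u1 v1 (Rlt_le _ _ Hlt)).
        rewrite <- (opp_RInt_swap (V := R_CompleteNormedModule)) by apply ex_RInt_std_normal_pdf.
        change (Rabs (- RInt std_normal_pdf u1 v1) < eps). rewrite Rabs_Ropp, Rabs_pos_eq; lra.
Qed.

Lemma Phi_sub x y : Phi x - Phi y = RInt std_normal_pdf y x.
Proof.
  unfold Phi.
  rewrite <- (RInt_gen_Chasles (V := R_CompleteNormedModule)
               (Fa := Rbar_locally m_infty) (Fc := at_point x) std_normal_pdf y).
  - rewrite RInt_gen_at_point by apply ex_RInt_std_normal_pdf.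
    change (plus ?u ?v) with (u + v). ring.
  - apply ex_RInt_gen_std_normal_pdf.
  - apply ex_RInt_gen_at_point, ex_RInt_std_normal_pdf.
Qed.

Lemma RInt_std_normal_pdf_right c H :
  RInt (fun t => std_normal_pdf (c + t)) 0 H = RInt std_normal_pdf c (c + H).
Proof.
  transitivity (RInt (fun t => scal 1 (std_normal_pdf (1 * t + c))) 0 H).
  - apply RInt_ext. intros t _. change (scal 1 ?z) with (1 * z).
    rewrite Rmult_1_l. f_equal. ring.
  - rewrite (RInt_comp_lin (V := R_CompleteNormedModule)) by apply ex_RInt_std_normal_pdf.
    f_equal; ring.
Qed.

Lemma RInt_std_normal_pdf_left c H :
  RInt (fun t => std_normal_pdf (c - t)) 0 H = RInt std_normal_pdf (c - H) c.
Proof.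
  assert (Hlin : RInt (fun t => scal (-1) (std_normal_pdf (-1 * t + c))) 0 H
                 = RInt std_normal_pdf c (c - H)).
  { rewrite (RInt_comp_lin (V := R_CompleteNormedModule)) by apply ex_RInt_std_normal_pdf.
    f_equal; ring. }
  rewrite <- (opp_RInt_swap (V := R_CompleteNormedModule) _ c (c - H))
    by apply ex_RInt_std_normal_pdf.
  rewrite <- Hlin, <- (RInt_opp (V := R_CompleteNormedModule)).
  2: { apply (ex_RInt_scal (V := R_CompleteNormedModule)). ex_RInt_smooth. }
  apply RInt_ext. intros t _. change (opp (scal (-1) ?z)) with (- (-1 * z)).
  replace (-1 * t + c) with (c - t) by ring. to_R_eq. ring.
Qed.

Lemma RInt_std_normal_pdf_window c H : RInt std_normal_pdf (c - H) (c + H)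
   = 2 / sqrt (2 * PI) * exp (- c ^ 2 / 2) * gauss_cosh_int H c.
Proof.
  rewrite <- (RInt_Chasles (V := R_CompleteNormedModule) _ (c - H) c (c + H))
    by apply ex_RInt_std_normal_pdf.
  rewrite <- RInt_std_normal_pdf_right, <- RInt_std_normal_pdf_left.
  change (plus ?u ?v) with (u + v). rewrite Rplus_comm.
  rewrite <- (RInt_plus (V := R_CompleteNormedModule)) by ex_RInt_smooth.
  unfold gauss_cosh_int. rewrite <- (RInt_scal (V := R_CompleteNormedModule)) by ex_RInt_smooth.
  apply RInt_ext. intros t _.
  change (plus ?u ?v) with (u + v). change (scal ?u ?v) with (u * v).
  unfold std_normal_pdf, cosh.
  replace (- (c + t) ^ 2 / 2) with (- c ^ 2 / 2 + (- t ^ 2 / 2 + - (c * t))) by field.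
  replace (- (c - t) ^ 2 / 2) with (- c ^ 2 / 2 + (- t ^ 2 / 2 + c * t)) by field.
  rewrite !exp_plus. pose proof sqrt_2PI_gt_1. to_R_eq. field. lra.
Qed.

Lemma std_normal_window_ratio H a b : 0 < H -> Rabs b < a ->
  exp (- ((a ^ 2 - b ^ 2) / 2))
  < RInt std_normal_pdf (a - H) (a + H) / RInt std_normal_pdf (b - H) (b + H)
  < exp (- ((1 - H ^ 2 / 3) * ((a ^ 2 - b ^ 2) / 2))).
Proof.
  intros HH Hba.
  assert (Hb0 : 0 <= Rabs b < a) by (split; [apply Rabs_pos|exact Hba]).
  pose proof (gauss_cosh_int_pos H (Rabs b) HH) as HB.
  pose proof (gauss_cosh_int_lt H (Rabs b) a HH Hb0) as HBA.
  pose proof (gauss_cosh_int_decreasing H (Rabs b) a HH Hb0) as Hdecr.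
  rewrite pow2_abs in Hdecr.
  rewrite !RInt_std_normal_pdf_window, <- (gauss_cosh_int_Rabs H b).
  set (A := gauss_cosh_int H a) in *. set (B := gauss_cosh_int H (Rabs b)) in *.
  set (D := (a ^ 2 - b ^ 2) / 2). set (k := H ^ 2 / 3) in Hdecr |- *.
  assert (Ea : exp (- a ^ 2 / 2) = exp (- D) * exp (- b ^ 2 / 2))
    by (rewrite <- exp_plus; f_equal; unfold D; field).
  assert (Eb : exp (- k * b ^ 2 / 2) = exp (- k * a ^ 2 / 2) * exp (k * D))
    by (rewrite <- exp_plus; f_equal; unfold D; field).
  assert (Ek : exp (- ((1 - k) * D)) = exp (- D) * exp (k * D))
    by (rewrite <- exp_plus; f_equal; ring).
  rewrite Eb in Hdecr. rewrite Ek, Ea.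
  pose proof sqrt_2PI_gt_1.
  replace (2 / sqrt (2 * PI) * (exp (- D) * exp (- b ^ 2 / 2)) * A
           / (2 / sqrt (2 * PI) * exp (- b ^ 2 / 2) * B)) with (exp (- D) * (A / B))
    by (field; pose proof (exp_pos (- b ^ 2 / 2)); repeat split; lra).
  pose proof (exp_pos (- D)). pose proof (exp_pos (- k * a ^ 2 / 2)).
  split.
  - assert (1 < A / B) by (apply Rlt_div_r; lra). nra.
  - apply Rmult_lt_compat_l; [lra|]. apply Rlt_div_l; [lra|]. nra.
Qed.

Lemma law_var_hyper_degenerate m r b P : (r + b <= 1)%nat -> (m <= r + b)%nat ->
  (forall k, P k = hyper_pmf m r b k) -> law_var m P = 0.
Proof.
  intros Hrb Hm HP.
  destruct m as [|[|m]]; [| |lia].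
  - unfold law_var, law_mean. simpl. ring.
  - unfold law_var, law_mean. simpl. rewrite !HP.
    assert (Hcases : (r = 0 /\ b = 1 \/ r = 1 /\ b = 0)%nat) by lia.
    destruct Hcases as [[-> ->]|[-> ->]]; unfold hyper_pmf, binZ, Binomial.C; simpl; field.
Qed.

(* A population of size [N <= 1] forces [sigma = 0]; otherwise [(N - 1) / N > 0]. *)
Lemma sigma0_pos n N sigma P : sym_law n N sigma P -> 0 < sigma -> 0 < sigma0 N sigma.
Proof.
  intros HP Hsigma.
  destruct N as [N'|]; [|exact Hsigma]. simpl.
  destruct (le_lt_dec 2 N') as [HN|HN].
  - apply sqrt_lt_R0. apply le_INR in HN. simpl in HN.
    apply Rmult_lt_0_compat; [apply Rdiv_lt_0_compat; lra|nra].
  - exfalso.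
    destruct HP as [m [[[HN' _]|[r [b [HN' [Hm HPk]]]]] [_ [Hvar _]]]]; [discriminate|].
    injection HN' as HN'. subst N'.
    rewrite (law_var_hyper_degenerate m r b P), sqrt_0 in Hvar by (auto; lia). lra.
Qed.

Theorem lemma4p1 (n : nat) (N : option nat) (sigma tau : R) (P : Z -> R)
  (HP : sym_law n N sigma P) (Hsigma : 0 < sigma)
  (Htau : sigma0 N sigma <= tau <= sigma) (s : R) (Hs : INR n / 2 < s) :
  exp (- ((s - INR n / 2) / tau ^ 2)) < g n tau (s + 1) / g n tau s /\
  g n tau (s + 1) / g n tau s
    < exp (- ((1 - 1 / (12 * tau ^ 2)) * ((s - INR n / 2) / tau ^ 2))).
Proof.
  assert (Htau0 : 0 < tau) by (pose proof (sigma0_pos n N sigma P HP Hsigma); lra).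
  set (H := 1 / (2 * tau)). set (c := INR n / 2) in *.
  set (a := (s + 1 / 2 - c) / tau). set (b := (s - 1 / 2 - c) / tau).
  assert (Ea : g n tau (s + 1) = RInt std_normal_pdf (a - H) (a + H)).
  { unfold g, G. rewrite Phi_sub. fold c. f_equal; unfold a, H; field; lra. }
  assert (Eb : g n tau s = RInt std_normal_pdf (b - H) (b + H)).
  { unfold g, G. rewrite Phi_sub. fold c. f_equal; unfold b, H; field; lra. }
  assert (Hba : Rabs b < a).
  { assert (0 < a - b) by (replace (a - b) with (1 / tau) by (unfold a, b; field; lra);
                           apply Rdiv_lt_0_compat; lra).
    assert (0 < a + b) by (replace (a + b) with (2 * (s - c) / tau) by (unfold a, b; field; lra);
                           apply Rdiv_lt_0_compat; lra).
    apply Rabs_def1; lra. }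
  assert (ED : (s - c) / tau ^ 2 = (a ^ 2 - b ^ 2) / 2) by (unfold a, b; field; lra).
  assert (Ek : 1 / (12 * tau ^ 2) = H ^ 2 / 3) by (unfold H; field; lra).
  rewrite Ea, Eb, ED, Ek.
  apply std_normal_window_ratio; [unfold H; apply Rdiv_lt_0_compat|]; lra.
Qed.
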